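(* For every positive integer $t$, every finite induced subgraph of $W'_t$ is triangle-free.
   Context: Construction of $G'_t$, $T'_t$, $W'_t$: build a countably infinite trigraph $G'_t$ (vertex set with two disjoint sets of edges, black and red; its total graph $\mathcal T(G'_t)$ uses all edges) and a rooted tree $T'_t$ on the same vertex set, partitioned into finite layers $L_0,L_1,\dots$ each inducing a left-to-right path of black edges. $L_0$ is a single vertex, the root. With $L_{\le i}=L_0\cup\dots\cup L_i$, layer $L_{i+1}$ is built (starting empty) as follows: for each $u\in L_i$ from left to right, let $N^\uparrow[u]:=(N_{\mathcal T(G'_t)}(u)\cap L_{\le i-1})\cup\{u\}$ and let $\mathcal B$ be the set of subsets of $N^\uparrow[u]$ in which every pair of distinct vertices is joined by a red edge of $G'_t$ (monochromatic red cliques). For every ordered pair $(B,R)$ of disjoint subsets of $N^\uparrow[u]$ with $B\in\mathcal B$ and $|B\cup R|\le t$: append a new vertex $v_{B,R}$ at the right end of $L_{i+1}$, joined by a black edge to the previously rightmost vertex of $L_{i+1}$ (if any), make it a child of $u$ in $T'_t$, add black edges from $v_{B,R}$ to all of $B$ and red edges to all of $R$; then append a further new vertex $v'_{B,R}$ at the right end of $L_{i+1}$, joined by a black edge to the previously rightmost vertex of $L_{i+1}$, and make it a child of $u$ in $T'_t$ (with no other edges). $W'_t$ is the graph on $V(G'_t)$ whose edges are the black edges of $G'_t$. *)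

From mathcomp Require Import all_boot.
Set Implicit Arguments. Unset Strict Implicit. Unset Printing Implicit Defensive.

(* Vertices of G'_t are natural numbers, numbered in order of creation.
   The root (L_0) is vertex 0.  A construction state records the number of
   vertices created so far, the black edges, the red edges (as lists of
   unordered pairs stored as ordered pairs) and the layers L_0, ..., L_k
   (each layer a left-to-right list of vertices). *)
Record tstate := TS {
  nv   : nat;
  blk  : seq (nat * nat);
  rd   : seq (nat * nat);
  lays : seq (seq nat) }.

Definition blackAdj (st : tstate) (x y : nat) : bool :=
  ((x, y) \in blk st) || ((y, x) \in blk st).
Definition redAdj (st : tstate) (x y : nat) : bool :=
  ((x, y) \in rd st) || ((y, x) \in rd st).
Definition totAdj (st : tstate) (x y : nat) : bool :=
  blackAdj st x y || redAdj st x y.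

Definition redClique (st : tstate) (B : seq nat) : bool :=
  all (fun x => all (fun y => (x == y) || redAdj st x y) B) B.

Fixpoint splits (s : seq nat) : seq (seq nat * seq nat) :=
  match s with
  | [::] => [:: ([::], [::])]
  | x :: s' =>
      flatten [seq [:: (x :: p.1, p.2); (p.1, x :: p.2); p] | p <- splits s']
  end.

(* Append v_{B,R} and v'_{B,R} at the right end of the current new layer cur. *)
Definition add_pair (st : tstate) (cur : seq nat) (BR : seq nat * seq nat)
  : tstate * seq nat :=
  let v := nv st in
  let v' := v.+1 in
  let pathE := if cur is [::] then [::] else [:: (last 0 cur, v)] in
  let blk' := blk st ++ pathE ++ [seq (v, b) | b <- BR.1] ++ [:: (v, v')] in
  let rd' := rd st ++ [seq (v, r) | r <- BR.2] in
  (TS v'.+1 blk' rd' (lays st), rcons (rcons cur v) v').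

(* The order in which the pairs (B,R) are processed is not fixed by the paper;
   it is given by an arbitrary reordering function [pick]. *)
Definition pickT := nat -> seq (seq nat * seq nat) -> seq (seq nat * seq nat).

Definition process_u (pick : pickT) (t : nat) (p : tstate * seq nat) (u : nat)
  : tstate * seq nat :=
  let st := p.1 in
  let lower := flatten (take (size (lays st)).-1 (lays st)) in
  let Nup := undup (u :: [seq w <- lower | totAdj st w u]) in
  let pairs := [seq BR <- splits Nup |
                 redClique st BR.1 && (size BR.1 + size BR.2 <= t)] in
  foldl (fun q BR => add_pair q.1 q.2 BR) p (pick u pairs).

Definition step (pick : pickT) (t : nat) (st : tstate) : tstate :=
  let Li := last [::] (lays st) in
  let q := foldl (process_u pick t) (st, [::]) Li in
  TS (nv q.1) (blk q.1) (rd q.1) (rcons (lays st) q.2).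

Definition init_state : tstate := TS 1 [::] [::] [:: [:: 0]].

Fixpoint build (pick : pickT) (t : nat) (k : nat) : tstate :=
  match k with
  | 0 => init_state
  | k.+1 => step pick t (build pick t k)
  end.

(* The (infinite) graph W'_t: vertices and black edges of G'_t. *)
Definition Wvert (pick : pickT) (t : nat) (v : nat) : Prop :=
  exists k, v < nv (build pick t k).
Definition Wadj (pick : pickT) (t : nat) (x y : nat) : Prop :=
  exists k, blackAdj (build pick t k) x y.

Definition induced_triangle_free (pick : pickT) (t : nat) (S : seq nat) : Prop :=
  ~ exists a b c, [/\ a \in S, b \in S, c \in S,
                     [/\ a != b, b != c & a != c] &
                     [/\ Wadj pick t a b, Wadj pick t b c & Wadj pick t a c]].

(* A vertex v_{B,R} is added fresh and is black-adjacent exactly to B, to the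
   previous rightmost vertex r of its layer (if any) and to its fresh twin
   v'_{B,R}.  Attaching a fresh vertex to a black-independent set creates no black
   triangle, and this set is independent: B is a red clique and no pair is joined
   in both colours (the red edges of v_{B,R} go to R, disjoint from its black
   neighbourhood); r is the previous twin, whose only black neighbour lies in the
   layer being built, hence not in B; and v'_{B,R} is isolated when attached.
   Edges are never removed, so a triangle of W'_t would already be a triangle at
   some finite stage of the construction. *)

From Pilot Require Import Defs.
From mathcomp Require Import all_boot zify.
(* mathcomp's nmodule also defines [add_pair]; restore the one of Defs. *)
Import Defs.

Set Implicit Arguments.
Unset Strict Implicit.
Unset Printing Implicit Defensive.

Section Star.

Variable T : eqType.

Definition star (v : T) (N : seq T) : rel T :=
  fun x y => (x == v) && (y \in N) || (y == v) && (x \in N).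

Definition isolated (E : rel T) (v : T) := forall x, ~~ E v x && ~~ E x v.

Definition triangle_free (E : rel T) :=
  forall a b c, a != b -> b != c -> a != c -> E a b -> E b c -> E a c -> False.

Lemma triangle_free_star (E : rel T) v (N : seq T) :
  triangle_free E -> isolated E v -> {in N &, forall x y, x != y -> ~~ E x y} ->
  triangle_free (fun x y => E x y || star v N x y).
Proof.
move=> triE isoE indN.
have to_v x y : E x y || star v N x y -> y = v -> x \in N.
  move=> + yv; rewrite /star yv eqxx andTb; have /andP[_ /negPf->] := isoE x.
  by rewrite orFb => /orP[/andP[/eqP->]|].
have from_v x y : E x y || star v N x y -> x = v -> y \in N.
  move=> + xv; rewrite /star xv eqxx andTb; have /andP[/negPf-> _] := isoE y.
  by rewrite orFb => /orP[|/andP[/eqP->]].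
have off_v x y : x != v -> y != v -> E x y || star v N x y -> E x y.
  by rewrite /star => /negPf-> /negPf->; rewrite !andFb !orbF.
move=> a b c ab bc ac Eab Ebc Eac.
have [av|va] := eqVneq a v.
  have /negP[] := indN _ _ (from_v _ _ Eab av) (from_v _ _ Eac av) bc.
  by apply: off_v Ebc; rewrite -av eq_sym.
have [bv|vb] := eqVneq b v.
  have /negP[] := indN _ _ (to_v _ _ Eab bv) (from_v _ _ Ebc bv) ac.
  by apply: off_v Eac; rewrite // -bv eq_sym.
have [cv|vc] := eqVneq c v.
  have /negP[] := indN _ _ (to_v _ _ Eac cv) (to_v _ _ Ebc cv) ab.
  exact: off_v Eab.
by apply: (triE a b c) => //; apply: off_v.
Qed.

Lemma star_disjoint (E F : rel T) v (N R : seq T) :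
  (forall x y, E x y -> ~~ F x y) -> isolated E v -> isolated F v ->
  v \notin N -> {in R, forall x, x \notin N} ->
  forall x y, E x y || star v N x y -> ~~ (F x y || star v R x y).
Proof.
move=> EF isoE isoF vN RN x y; rewrite negb_or.
case/orP=> [Exy|/orP[]/andP[/eqP-> Ny]].
- rewrite EF //=; apply/norP; split; apply/negP=> /andP[/eqP xyv _].
    by move: (isoE y); rewrite -xyv Exy.
  by move: (isoE x); rewrite -xyv Exy andbF.
- have /andP[/negPf-> _] := isoF y.
  rewrite /star eqxx /=; apply/norP; split; first by apply/negP=> /RN; rewrite Ny.
  by apply/negP=> /andP[/eqP yv _]; move: vN; rewrite -yv Ny.
- have /andP[_ /negPf->] := isoF x.
  rewrite /star eqxx /=; apply/norP; split.
    by apply/negP=> /andP[/eqP xv _]; move: vN; rewrite -xv Ny.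
  by apply/negP=> /RN; rewrite Ny.
Qed.

End Star.

Lemma foldl_inv (A : Type) (B : eqType) (P : A -> Prop) (f : A -> B -> A) s x :
  (forall y b, b \in s -> P y -> P (f y b)) -> P x -> P (foldl f x s).
Proof.
elim: s x => //= b s IH x Pf Px; apply: IH (Pf _ _ (mem_head b s) Px).
by move=> y c cs; apply: Pf; rewrite inE cs orbT.
Qed.

Lemma splits_mask s BR : BR \in splits s -> exists m, perm_eq (BR.1 ++ BR.2) (mask m s).
Proof.
elim: s BR => [|x s IH] BR /=; first by rewrite inE => /eqP->; exists [::].
case/flatten_mapP=> p /IH[m pm]; rewrite !inE => /or3P[]/eqP-> /=.
- by exists (true :: m); rewrite /= perm_cons.
- exists (true :: m); rewrite /= -cat1s perm_catCA /= perm_cons.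
  exact: pm.
- by exists (false :: m).
Qed.

Lemma mem_map_pairl (T1 T2 : eqType) (v x : T1) (y : T2) (s : seq T2) :
  ((x, y) \in [seq (v, b) | b <- s]) = (x == v) && (y \in s).
Proof.
apply/mapP/andP => [[b bs [-> ->]] // | [/eqP-> ys]].
by exists y.
Qed.

Lemma blackAdjC st : symmetric (blackAdj st).
Proof. by move=> x y; rewrite /blackAdj orbC. Qed.

Lemma redAdjC st : symmetric (redAdj st).
Proof. by move=> x y; rewrite /redAdj orbC. Qed.

Lemma redAdj_add_pair st cur BR x y :
  redAdj (add_pair st cur BR).1 x y = redAdj st x y || star (nv st) BR.2 x y.
Proof.
rewrite /redAdj /star /add_pair /= !mem_cat !mem_map_pairl -!orbA.
by do !bool_congr.
Qed.

Lemma redClique_add_pair st cur BR B :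
  redClique st B -> redClique (add_pair st cur BR).1 B.
Proof.
apply: sub_all => x; apply: sub_all => y.
by rewrite redAdj_add_pair => /orP[->|->]; rewrite ?orbT.
Qed.

Definition wf_graph (st : tstate) :=
  [/\ forall x y, totAdj st x y -> x < nv st,
      forall x y, blackAdj st x y -> ~~ redAdj st x y &
      triangle_free (blackAdj st)].

Lemma wf_graph_isolated st v :
  wf_graph st -> nv st <= v -> isolated (blackAdj st) v /\ isolated (redAdj st) v.
Proof.
case=> bnd _ _ nv_le.
have from_v y : ~~ totAdj st v y by apply/negP=> /bnd; lia.
have to_v y : ~~ totAdj st y v by rewrite /totAdj blackAdjC redAdjC from_v.
by split=> x; move: (from_v x) (to_v x); rewrite /totAdj => /norP[? ?] /norP[? ?];
  apply/andP.
Qed.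

Definition rightmost (cur : seq nat) : seq nat :=
  if cur is [::] then [::] else [:: last 0 cur].

Lemma rightmost_rcons cur v : rightmost (rcons cur v) = [:: v].
Proof. by case: cur => //= c cs; rewrite last_rcons. Qed.

Lemma mem_rightmost cur : {subset rightmost cur <= cur}.
Proof. by case: cur => //= c cs r; rewrite inE => /eqP->; apply: mem_last. Qed.

Lemma rightmost_uniq cur : {in rightmost cur &, forall r r', r = r'}.
Proof. by case: cur => //= c cs r r'; rewrite !inE => /eqP-> /eqP->. Qed.

Definition black_nbrs (cur : seq nat) (BR : seq nat * seq nat) (v' : nat) :=
  rightmost cur ++ rcons BR.1 v'.

Lemma mem_black_nbrs cur BR v' x :
  (x \in black_nbrs cur BR v') = [|| x \in rightmost cur, x == v' | x \in BR.1].
Proof. by rewrite mem_cat mem_rcons inE. Qed.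

Lemma blackAdj_add_pair st cur BR x y :
  blackAdj (add_pair st cur BR).1 x y =
  blackAdj st x y || star (nv st) (black_nbrs cur BR (nv st).+1) x y.
Proof.
rewrite /blackAdj /star /black_nbrs /add_pair /= -cats1 !mem_cat !mem_map_pairl !inE.
case: cur => [|c cs] /=; rewrite ?inE ?xpair_eqE !andb_orr -!orbA.
  by do !bool_congr.
by rewrite [(x == last _ _) && _]andbC [(y == last _ _) && _]andbC; do !bool_congr.
Qed.

Lemma wf_graph_add_pair st cur BR (n := nv st) (N := black_nbrs cur BR n.+1) :
  wf_graph st -> {in N ++ BR.2, forall x, x < n.+2} -> n \notin N ->
  {in BR.2, forall x, x \notin N} -> {in N &, forall x y, x != y -> ~~ blackAdj st x y} ->
  wf_graph (add_pair st cur BR).1.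
Proof.
move=> st_wf new_lt n_notN R_notN N_indep.
have [isoB isoR] := wf_graph_isolated st_wf (leqnn n).
case: st_wf => bnd disj tri; split.
- have star_lt M x y : {subset M <= N ++ BR.2} -> star n M x y -> x < n.+2.
    by move=> sub /orP[/andP[/eqP-> _]|/andP[_ /sub/new_lt]].
  move=> x y; rewrite /totAdj blackAdj_add_pair redAdj_add_pair orbACA /=.
  case/orP=> [/bnd x_lt|/orP[]/star_lt]; first lia.
    by apply=> z zN; rewrite mem_cat zN.
  by apply=> z zR; rewrite mem_cat zR orbT.
- move=> x y; rewrite blackAdj_add_pair redAdj_add_pair.
  exact: star_disjoint disj isoB isoR n_notN R_notN x y.
- move=> a b c ab bc ac; rewrite !blackAdj_add_pair.
  exact: triangle_free_star tri isoB N_indep a b c ab bc ac.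
Qed.

Definition admissible (n0 : nat) (st : tstate) (BR : seq nat * seq nat) :=
  [/\ {in BR.1 ++ BR.2, forall x, x < n0}, {in BR.2, forall x, x \notin BR.1}
    & redClique st BR.1].

(* While layer L_{i+1} is built: [n0] is its first vertex, [p.2] its part built so far. *)
Definition layer_inv (n0 : nat) (L : seq (seq nat)) (p : tstate * seq nat) :=
  [/\ wf_graph p.1, lays p.1 = L, n0 <= nv p.1,
      {in p.2, forall x, n0 <= x < nv p.1}
    & {in rightmost p.2, forall r x, blackAdj p.1 r x -> n0 <= x}].

Lemma black_nbrs_indep n0 L p BR :
  layer_inv n0 L p -> admissible n0 p.1 BR ->
  {in black_nbrs p.2 BR (nv p.1).+1 &, forall x y, x != y -> ~~ blackAdj p.1 x y}.
Proof.
case: p => st cur [] /= st_wf _ _ _ rm_nbr [BR_lt _ cliqueB].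
have [iso_new _] := wf_graph_isolated st_wf (leqnSn (nv st)).
have rm_B r b : r \in rightmost cur -> b \in BR.1 -> ~~ blackAdj st r b.
  move=> /rm_nbr r_nbr bB; apply/negP=> /r_nbr.
  by have := BR_lt b; rewrite mem_cat bB => /(_ isT); lia.
move=> x y /[!mem_black_nbrs] /or3P[xr|/eqP->|xB] /or3P[yr|/eqP->|yB] xy.
- by rewrite (rightmost_uniq xr yr) eqxx in xy.
- by case/andP: (iso_new x).
- exact: rm_B.
- by case/andP: (iso_new y).
- by case/andP: (iso_new (nv st).+1).
- by case/andP: (iso_new y).
- by rewrite blackAdjC rm_B.
- by case/andP: (iso_new x).
- have /allP/(_ _ xB)/allP/(_ _ yB) := cliqueB; rewrite (negPf xy) /=.
  by apply: contraL; case: st_wf => _ disj _; apply: disj.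
Qed.

Lemma add_pair_layer_inv n0 L p BR :
  layer_inv n0 L p -> admissible n0 p.1 BR -> layer_inv n0 L (add_pair p.1 p.2 BR).
Proof.
move=> inv adm; have N_indep := black_nbrs_indep inv adm.
case: p inv adm N_indep => st cur [] /= st_wf Lst n0_le cur_bnd _ [BR_lt R_notB _].
set n := nv st => N_indep.
have [iso_new _] := wf_graph_isolated st_wf (leqnSn n).
have BR_n x : x \in BR.1 ++ BR.2 -> x < n by move/BR_lt; lia.
have rm_bnd r : r \in rightmost cur -> n0 <= r < n by move/mem_rightmost/cur_bnd.
split=> //=.
- apply: wf_graph_add_pair => //.
  + move=> x; rewrite mem_cat mem_black_nbrs -!orbA => /or3P[/rm_bnd|/eqP->|xBR]; try lia.
    by have := BR_n x; rewrite mem_cat xBR => /(_ isT); lia.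
  + apply/negP; rewrite mem_black_nbrs => /or3P[/rm_bnd|/eqP|xB]; try lia.
    by have := BR_n n; rewrite mem_cat xB => /(_ isT); lia.
  + move=> x xR; rewrite mem_black_nbrs (negPf (R_notB x xR)) orbF.
    have := BR_lt x; rewrite mem_cat xR orbT => /(_ isT) x_lt.
    by apply/negP=> /orP[/rm_bnd|/eqP]; lia.
- lia.
- by move=> x; rewrite !(mem_rcons, inE) => /or3P[/eqP->|/eqP->|/cur_bnd]; lia.
- move=> _ /[1!rightmost_rcons] /[1!inE] /eqP-> x.
  rewrite blackAdj_add_pair (negPf (andP (iso_new x)).1) /star /=.
  by case/orP=> /andP[/eqP]; lia.
Qed.

Lemma foldl_add_pair_layer_inv n0 L p s :
  {in s, forall BR, admissible n0 p.1 BR} -> layer_inv n0 L p ->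
  layer_inv n0 L (foldl (fun q BR => add_pair q.1 q.2 BR) p s).
Proof.
move=> adm inv.
pose P q := layer_inv n0 L q /\ {in s, forall BR, admissible n0 q.1 BR}.
suff [] : P (foldl (fun q BR => add_pair q.1 q.2 BR) p s) by [].
apply: foldl_inv => [q BR BRs [q_inv q_adm]|]; last by [].
split=> [|BR' /q_adm[? ? ?]]; first exact: add_pair_layer_inv (q_adm _ BRs).
by split=> //; apply: redClique_add_pair.
Qed.

Section Construction.

Variables (pick : pickT) (t : nat).

Hypothesis pick_perm : forall u s, perm_eq (pick u s) s.

Lemma process_u_layer_inv n0 L p u :
  {in flatten L, forall x, x < n0} -> u < n0 ->
  layer_inv n0 L p -> layer_inv n0 L (process_u pick t p u).
Proof.
move=> L_lt u_lt inv; have Lp : lays p.1 = L by case: inv.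
rewrite /process_u Lp; apply: foldl_add_pair_layer_inv inv => BR.
set Nup := undup _.
rewrite (perm_mem (pick_perm _ _)) mem_filter => /andP[/andP[cliqueB _]].
case/splits_mask=> m BR_perm; split=> //.
- move=> x /[1!perm_mem BR_perm] /mem_mask.
  rewrite mem_undup inE => /orP[/eqP->//|]; rewrite mem_filter => /andP[_].
  by move=> xL; apply: L_lt; rewrite -(cat_take_drop (size L).-1 L) flatten_cat mem_cat xL.
- have : uniq (mask m Nup) by rewrite mask_uniq ?undup_uniq.
  rewrite -(perm_uniq BR_perm) cat_uniq.
  by case/and3P=> _ /hasPn.
Qed.

Definition wf_state (st : tstate) :=
  wf_graph st /\ {in flatten (lays st), forall x, x < nv st}.

Lemma step_wf st : wf_state st -> wf_state (step pick t st).
Proof.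
case=> st_wf L_lt; rewrite /step.
set q := foldl _ _ _.
have : layer_inv (nv st) (lays st) q.
  apply: foldl_inv => [p u uLi|]; last by split.
  apply: process_u_layer_inv => //; apply: L_lt.
  move: (mem_last [::] (lays st)); rewrite inE => /orP[/eqP Li0|LiL].
    by rewrite Li0 in uLi.
  by apply/flattenP; exists (last [::] (lays st)).
case=> q_wf _ n_le q2_bnd _; split=> //= x.
rewrite flatten_rcons mem_cat => /orP[/L_lt x_lt|/q2_bnd/andP[] //].
exact: leq_trans n_le.
Qed.

Lemma build_wf k : wf_state (build pick t k).
Proof.
elim: k => [|k IH]; last exact: step_wf.
by split=> //= x; rewrite inE => /eqP->.
Qed.

Lemma blk_step_sub st : {subset blk st <= blk (step pick t st)}.
Proof.
pose P (p : tstate * seq nat) := {subset blk st <= blk p.1}.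
rewrite /step /=; apply: (@foldl_inv _ _ P) => // p u _ p_sub.
apply: (@foldl_inv _ _ P) => // q BR _ q_sub e /q_sub.
by rewrite /= mem_cat => ->.
Qed.

Lemma blackAdj_build_mono k k' x y :
  k <= k' -> blackAdj (build pick t k) x y -> blackAdj (build pick t k') x y.
Proof.
move=> /subnK <-; elim: (k' - k) => //= d IH /IH.
by rewrite /blackAdj => /orP[] /blk_step_sub ->; rewrite ?orbT.
Qed.

End Construction.

Theorem mainTheorem14 (t : nat) (pick : pickT) :
  0 < t ->
  (forall u s, perm_eq (pick u s) s) ->
  forall S : seq nat, (forall v, v \in S -> Wvert pick t v) ->
  induced_triangle_free pick t S.
Proof.
(* W'_t itself is triangle-free: neither [0 < t] nor the choice of [S] matters. *)
move=> _ pick_perm S _ [a [b [c [_ _ _ [ab bc ac] [[k1 ab1] [k2 bc2] [k3 ac3]]]]]].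
pose K := maxn k1 (maxn k2 k3).
have [[_ _ tri] _] := build_wf t pick_perm K.
apply: (tri a b c ab bc ac).
- by apply: (blackAdj_build_mono _ ab1); rewrite /K; lia.
- by apply: (blackAdj_build_mono _ bc2); rewrite /K; lia.
- by apply: (blackAdj_build_mono _ ac3); rewrite /K; lia.
Qed.
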